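(* Let $G=(V,E)$ be a finite directed graph with a source $s\in V$, a destination $d\in V$ and an integer time budget $T\ge 0$. Each edge $(i,j)\in E$ carries a travel-time probability mass function $p_{ij}$ supported on the positive integers, with minimum travel time $\delta_{ij}=\min\{t: p_{ij}(t)>0\}\ge 1$. Define the optimal-policy on-time arrival probabilities $u_i:\{0,1,\dots,T\}\to[0,1]$ by $u_d(t)=1$ for all $t$, and for $i\neq d$, $$u_{ij}(t)=\sum_{\tau=\delta_{ij}}^{t} u_j(t-\tau)\,p_{ij}(\tau),\qquad u_i(t)=\max_{j:(i,j)\in E} u_{ij}(t),$$ (with the maximum over an empty set equal to $0$). For a directed path $P$ from $s$ to a node $i$, let $q^P$ be the travel-time distribution along $P$ (the convolution of the $p_{e}$ over the edges $e$ of $P$; for the trivial path $[s]$ it is the point mass at $0$), and let $r^P(T)=\sum_{t=0}^{T} q^P(t)\,u_i(T-t)$. Consider the following best-first search: maintain a max-priority queue $Q$ of entries $(r,(q,P))$; initially $Q$ contains $(u_s(T),(\text{point mass at }0,[s]))$. While $Q$ is nonempty, remove an entry $(r,(q,P))$ with maximum key $r$; let $i$ be the last node of $P$; if $i=d$, return $P$; otherwise, for every $j$ with $(i,j)\in E$ and $j\notin P$, insert the entry $\big(\sum_{t=0}^{T}(q\ast p_{ij})(t)\,u_j(T-t),\ (q\ast p_{ij},\ P\,\|\,[j])\big)$, where $\ast$ is convolution and $\|$ is concatenation. If $Q$ becomes empty, return nil. Then this procedure terminates, and if it returns a path $P$, then $P$ is a simple directed path from $s$ to $d$ that maximizes the on-time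 arrival probability $\Pr(\text{travel time along }P\le T)=\sum_{t=0}^{T} q^P(t)$ over all simple directed paths from $s$ to $d$.
   Context: This is the path-based stochastic on-time arrival (SOTA) problem: find a fixed route from $s$ to $d$ maximizing the probability that the total travel time (sum of independent edge travel times) does not exceed the budget $T$. The functions $u_i$ are the on-time arrival probabilities of the optimal adaptive routing policy (where the next edge may depend on the remaining budget), and $r^P(T)$ is the arrival probability obtained by following the fixed path $P$ to its last node $i$ and then following the optimal policy. Time is discretized in integer units. *)

From HB Require Import structures.
From mathcomp Require Import all_boot all_order all_algebra.
From mathcomp Require Import all_classical all_reals all_analysis.
From Stdlib Require List.
Set Implicit Arguments. Unset Strict Implicit. Unset Printing Implicit Defensive.
Import Order.TTheory GRing.Theory Num.Theory.
Import numFieldNormedType.Exports.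
Local Open Scope classical_set_scope.
Local Open Scope ring_scope.

Section SOTA.
Variables (R : realType) (V : finType).

Definition is_pmf_pos (f : nat -> R) : Prop :=
  [/\ (forall t, 0 <= f t), f 0%N = 0 &
      (fun n : nat => \sum_(0 <= k < n) f k) @ \oo --> (1 : R)].

(* delta_ij = min { t : p_ij(t) > 0 } (0 if no such t, which the pmf hypotheses exclude) *)
Definition delta (f : nat -> R) : nat :=
  match pselect (exists t : nat, (fun t => 0 < f t) t) with
  | left h => ex_minn h
  | right _ => 0%N
  end.

Definition conv (f g : nat -> R) : nat -> R :=
  fun t => \sum_(k < t.+1) f k * g (t - k)%N.

Definition dirac0 : nat -> R := fun t => if t == 0%N then 1 else 0.

Definition u_edge (p : V -> V -> nat -> R) (u : V -> nat -> R) (i j : V) (t : nat) : R :=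
  \sum_(delta (p i j) <= tau < t.+1) u j (t - tau)%N * p i j tau.

Definition is_opt_policy (E : rel V) (p : V -> V -> nat -> R) (d : V) (T : nat)
    (u : V -> nat -> R) : Prop :=
  (forall t, (t <= T)%N -> u d t = 1) /\
  (forall i, i != d -> forall t, (t <= T)%N ->
     u i t = \big[Num.max/0]_(j | E i j) u_edge p u i j t).

(* distribution of the travel time along the path x :: ps, starting from accumulated q *)
Fixpoint pathdist (p : V -> V -> nat -> R) (q : nat -> R) (x : V) (ps : seq V) : nat -> R :=
  match ps with
  | [::] => q
  | y :: ps' => pathdist p (conv q (p x y)) y ps'
  end.

Definition qP (p : V -> V -> nat -> R) (P : seq V) : nat -> R :=
  match P with
  | [::] => dirac0
  | x :: ps => pathdist p dirac0 x ps
  end.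

Definition on_time_prob (p : V -> V -> nat -> R) (T : nat) (P : seq V) : R :=
  \sum_(t < T.+1) qP p P t.

Definition simple_path (E : rel V) (s d : V) (P : seq V) : bool :=
  [&& P == s :: behead P, path E s (behead P), uniq P & last s (behead P) == d].

Definition entry := (R * ((nat -> R) * seq V))%type.

Inductive state := Running of seq entry | Finished of option (seq V).


Definition new_entry (p : V -> V -> nat -> R) (u : V -> nat -> R) (T : nat)
    (q : nat -> R) (P : seq V) (i j : V) : entry :=
  let q' := conv q (p i j) in
  (\sum_(t < T.+1) q' t * u j (T - t)%N, (q', rcons P j)).

Definition successors (E : rel V) (p : V -> V -> nat -> R) (u : V -> nat -> R) (T : nat)
    (s : V) (q : nat -> R) (P : seq V) : seq entry :=
  let i := last s P in
  [seq new_entry p u T q P i j | j <- enum V & E i j && (j \notin P)].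

Inductive bfs_step (E : rel V) (p : V -> V -> nat -> R) (u : V -> nat -> R) (T : nat)
    (s d : V) : state -> state -> Prop :=
  | step_empty : bfs_step E p u T s d (Running [::]) (Finished None)
  | step_found : forall Q1 Q2 (e : entry),
      (forall e', List.In e' (Q1 ++ Q2) -> e'.1 <= e.1) ->
      last s e.2.2 = d ->
      bfs_step E p u T s d (Running (Q1 ++ e :: Q2)) (Finished (Some e.2.2))
  | step_expand : forall Q1 Q2 (e : entry),
      (forall e', List.In e' (Q1 ++ Q2) -> e'.1 <= e.1) ->
      last s e.2.2 <> d ->
      bfs_step E p u T s d (Running (Q1 ++ e :: Q2))
        (Running (Q1 ++ Q2 ++ successors E p u T s e.2.1 e.2.2)).

Definition bfs_init (u : V -> nat -> R) (T : nat) (s : V) : state :=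
  Running [:: (u s T, (dirac0, [:: s]))].

Inductive reach (step : state -> state -> Prop) : state -> state -> Prop :=
  | reach_refl : forall x, reach step x x
  | reach_step : forall x y z, step x y -> reach step y z -> reach step x z.

End SOTA.
Arguments Running {R V}.
Arguments Finished {R V}.

From Pilot Require Import Defs.
From HB Require Import structures.
From mathcomp Require Import all_boot all_order all_algebra.
From mathcomp Require Import all_classical all_reals all_analysis.
From mathcomp Require Import zify.
Set Implicit Arguments. Unset Strict Implicit. Unset Printing Implicit Defensive.
Import Order.TTheory GRing.Theory Num.Theory.
Local Open Scope ring_scope.

(* The key r^P of a queue entry bounds the on-time probability of every simple
   completion of P to d: this is the optimality inequality u_i >= u_ij applied
   along the completion, one edge at a time. When P already ends at d the key
   is exactly the on-time probability of P. The queue always contains a prefix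
   of every simple s-d path, so when an entry ending at d has the maximal key,
   its on-time probability is at least the key of the queued prefix of any
   other simple s-d path, hence at least that path's on-time probability.
   For termination, an expansion replaces an entry whose path has n nodes by at
   most |V| entries whose paths have n + 1 <= |V| nodes, so the total weight
   (|V| + 1)^(|V| - n) summed over the queue decreases. *)

Lemma In_memP (T : eqType) (x : T) (s : seq T) : reflect (List.In x s) (x \in s).
Proof.
elim: s => [|y s IH] /=; first by constructor.
rewrite in_cons; apply: (iffP orP) => [[/eqP ->|/IH]|[<-|/IH]]; by [left|right].
Qed.

Lemma In_cat_cons (T : Type) (x e : T) (s1 s2 : seq T) :
  List.In x (s1 ++ e :: s2) <-> x = e \/ List.In x (s1 ++ s2).
Proof. by rewrite !List.in_app_iff /=; intuition. Qed.

Lemma uniq_last_cat (T : eqType) (x : T) (s1 s2 : seq T) :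
  uniq (x :: s1 ++ s2) -> uniq (last x s1 :: s2).
Proof.
rewrite -cat_cons cat_uniq => /and3P[_ /hasPn s2_notin_s1 uniq_s2].
by rewrite /= uniq_s2 andbT; apply/negP => /s2_notin_s1; rewrite mem_last.
Qed.

Lemma exists_max_split (T : Type) (R : realDomainType) (key : T -> R) (Q : seq T) :
  Q <> [::] -> exists Q1 e Q2,
    Q = Q1 ++ e :: Q2 /\ forall e', List.In e' (Q1 ++ Q2) -> key e' <= key e.
Proof.
elim: Q => [//|a [|b Q] IH] _; first by exists [::], a, [::].
have [Q1 [e [Q2 [defQ max_e]]]] := IH ltac:(by []).
have [a_le_e|e_lt_a] := leP (key a) (key e).
  exists (a :: Q1), e, Q2; split; first by rewrite defQ.
  by move=> e' /= [<-|/max_e].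
exists [::], a, (b :: Q); split=> // e'; rewrite /= -/(List.In e' (b :: Q)) defQ.
by case/In_cat_cons=> [->|/max_e e'_le_e]; rewrite ltW // (le_lt_trans e'_le_e).
Qed.

Section Antidiagonal.
Variable M : nmodType.

Lemma sum_antidiagonal (F : nat -> nat -> M) N :
  \sum_(m < N.+1) \sum_(k < m.+1) F k (m - k)%N =
  \sum_(k < N.+1) \sum_(x < (N - k).+1) F k x.
Proof.
elim: N F => [|N IH] F; first by rewrite !big_ord1.
rewrite big_ord_recr /= IH [RHS]big_ord_recr /= subnn big_ord1.
have split_last (k : 'I_N.+1) : \sum_(x < (N.+1 - k).+1) F k x =
    \sum_(x < (N - k).+1) F k x + F k (N.+1 - k)%N.
  by rewrite big_ord_recr /= subSn // -ltnS.
rewrite (eq_bigr _ (fun k _ => split_last k)) big_split /= -addrA.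
by rewrite [X in _ + X = _]big_ord_recr /= subnn.
Qed.

End Antidiagonal.

Section Convolution.
Variable R : realType.
Implicit Types f g h : nat -> R.

Lemma dirac0_ge0 t : 0 <= Defs.dirac0 R t.
Proof. by rewrite /Defs.dirac0; case: eqP. Qed.

Lemma conv_ge0 f g : (forall t, 0 <= f t) -> (forall t, 0 <= g t) ->
  forall t, 0 <= Defs.conv f g t.
Proof. by move=> f_ge0 g_ge0 t; apply: sumr_ge0 => k _; apply: mulr_ge0. Qed.

Lemma sum_conv_mulr f g h N :
  \sum_(t < N.+1) Defs.conv f g t * h (N - t)%N =
  \sum_(k < N.+1) f k * \sum_(x < (N - k).+1) g x * h (N - k - x)%N.
Proof.
under [RHS]eq_bigr do rewrite mulr_sumr.
rewrite -(sum_antidiagonal (fun k x => f k * (g x * h (N - k - x)%N))).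
apply: eq_bigr => m _; rewrite /Defs.conv mulr_suml; apply: eq_bigr => k _ /=.
have k_le_m : (k <= m)%N by rewrite -ltnS.
have m_le_N : (m <= N)%N by rewrite -ltnS.
by rewrite mulrA; congr (_ * h _); lia.
Qed.

Lemma lt_delta_eq0 f x : (forall t, 0 <= f t) -> (x < delta f)%N -> f x = 0.
Proof.
move=> f_ge0; rewrite /delta; case: pselect => [h|_] //.
case: ex_minnP => m _ min_m x_lt_m; apply/eqP; rewrite eq_le f_ge0 andbT leNgt.
by apply/negP => /min_m; rewrite leqNgt x_lt_m.
Qed.

Lemma sum_mul_from_delta f (F : nat -> R) n : (forall t, 0 <= f t) ->
  \sum_(delta f <= x < n) F x * f x = \sum_(0 <= x < n) F x * f x.
Proof.
move=> f_ge0; have [delta_le_n|n_lt_delta] := leqP (delta f) n.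
  rewrite (big_cat_nat (leq0n (delta f)) delta_le_n) /=.
  rewrite [X in _ = X + _]big1_seq ?add0r //.
  by move=> x; rewrite mem_index_iota => /andP[_ /(lt_delta_eq0 f_ge0) ->]; rewrite mulr0.
rewrite big_geq ?(ltnW n_lt_delta) // big1_seq // => x; rewrite mem_index_iota.
by case/andP=> _ x_lt_n; rewrite (lt_delta_eq0 f_ge0) ?mulr0 // (ltn_trans x_lt_n).
Qed.

End Convolution.

Section PathDistribution.
Variables (R : realType) (V : finType) (p : V -> V -> nat -> R).

Lemma pathdist_cat q x ps1 ps2 :
  pathdist p q x (ps1 ++ ps2) = pathdist p (pathdist p q x ps1) (last x ps1) ps2.
Proof. by elim: ps1 q x => [|y ps1 IH] q x //=. Qed.

Lemma pathdist_rcons q x ps j :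
  pathdist p q x (rcons ps j) = Defs.conv (pathdist p q x ps) (p (last x ps) j).
Proof. by rewrite -cats1 pathdist_cat. Qed.

Lemma pathdist_ge0 (E : rel V) q x ps :
  (forall i j, E i j -> forall t, 0 <= p i j t) -> (forall t, 0 <= q t) ->
  path E x ps -> forall t, 0 <= pathdist p q x ps t.
Proof.
move=> p_ge0; elim: ps q x => [|y ps IH] q x q_ge0 //= /andP[Exy E_ps].
by apply: IH => //; apply: conv_ge0 => //; apply: p_ge0.
Qed.

End PathDistribution.

Section OptimalPolicy.
Variables (R : realType) (V : finType) (E : rel V) (d : V) (T : nat).
Variables (p : V -> V -> nat -> R) (u : V -> nat -> R).
Hypotheses (hp : forall i j, E i j -> is_pmf_pos (p i j))
           (hu : is_opt_policy E p d T u).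

Definition policy_value (q : nat -> R) (i : V) : R :=
  \sum_(t < T.+1) q t * u i (T - t)%N.

Lemma edge_pmf_ge0 i j : E i j -> forall t, 0 <= p i j t.
Proof. by case/hp. Qed.

Lemma policy_value_dest q : policy_value q d = \sum_(t < T.+1) q t.
Proof. by apply: eq_bigr => t _; rewrite hu.1 ?mulr1 // leq_subr. Qed.

Lemma policy_value_conv_le q i j : (forall t, 0 <= q t) -> i != d -> E i j ->
  policy_value (Defs.conv q (p i j)) j <= policy_value q i.
Proof.
move=> q_ge0 i_neq_d Eij; rewrite /policy_value sum_conv_mulr.
apply: ler_sum => t _; apply: ler_wpM2l; first exact: q_ge0.
rewrite (hu.2 i i_neq_d _ (leq_subr t T)); apply: le_trans (le_bigmax_cond _ _ Eij).
rewrite /u_edge sum_mul_from_delta ?big_mkord; last exact: edge_pmf_ge0.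
by under eq_bigr do rewrite mulrC.
Qed.

Lemma sum_pathdist_le_policy_value q x ps : (forall t, 0 <= q t) ->
  path E x ps -> uniq (x :: ps) -> last x ps = d ->
  \sum_(t < T.+1) pathdist p q x ps t <= policy_value q x.
Proof.
elim: ps x q => [|y ps IH] x q q_ge0 /=; first by move=> _ _ ->; rewrite policy_value_dest.
case/andP=> Exy E_ps /andP[x_notin uniq_ps] last_d.
have x_neq_d : x != d by apply: contraNneq x_notin => ->; rewrite -last_d mem_last.
apply: le_trans (policy_value_conv_le q_ge0 x_neq_d Exy).
by apply: IH => //; apply: conv_ge0 => //; apply: edge_pmf_ge0.
Qed.

Variable s : V.

Lemma simple_pathE P : simple_path E s d P ->
  exists ps, [/\ P = s :: ps, path E s ps, uniq (s :: ps) & last s ps = d].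
Proof.
by case: P => [|x ps] /and4P[/eqP // [->] E_ps uniq_ps /eqP last_d]; exists ps.
Qed.

Definition entry_ok (e : entry R V) : Prop :=
  exists ps, [/\ e.2.2 = s :: ps, path E s ps, uniq (s :: ps),
    e.2.1 = pathdist p (Defs.dirac0 R) s ps & e.1 = policy_value e.2.1 (last s ps)].

Definition covers (Q : seq (entry R V)) : Prop :=
  forall ps, path E s ps -> uniq (s :: ps) -> last s ps = d ->
  exists2 e, List.In e Q & exists ps1 ps2, ps = ps1 ++ ps2 /\ e.2.2 = s :: ps1.

Definition optimal_path (P : seq V) : Prop :=
  simple_path E s d P /\
  forall P', simple_path E s d P' -> on_time_prob p T P' <= on_time_prob p T P.

Definition search_inv (st : state R V) : Prop :=
  match st with
  | Running Q => (forall e, List.In e Q -> entry_ok e) /\ covers Q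
  | Finished None => True
  | Finished (Some P) => optimal_path P
  end.

Lemma search_inv_init : search_inv (bfs_init u T s).
Proof.
split=> [e [<-|//]|ps _ _ _].
  exists [::]; split=> //=; rewrite /policy_value big_ord_recl big1 ?addr0 => [|i _].
    by rewrite /Defs.dirac0 /= mul1r subn0.
  by rewrite /Defs.dirac0 /= mul0r.
by exists (u s T, (Defs.dirac0 R, [:: s])); [left | exists [::], ps].
Qed.

Lemma entry_ok_dest e : entry_ok e -> last s e.2.2 = d -> e.1 = on_time_prob p T e.2.2.
Proof. by case=> ps [-> _ _ -> ->] /= ->; rewrite policy_value_dest. Qed.

Lemma on_time_prob_le_prefix_key e ps1 ps2 : entry_ok e -> e.2.2 = s :: ps1 ->
  path E s (ps1 ++ ps2) -> uniq (s :: ps1 ++ ps2) -> last s (ps1 ++ ps2) = d ->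
  on_time_prob p T (s :: ps1 ++ ps2) <= e.1.
Proof.
case=> ps [-> E_ps _ -> ->] [<-]; rewrite cat_path last_cat => /andP[E_ps1 E_ps2].
move=> uniq_ps last_d; rewrite /on_time_prob /= pathdist_cat.
apply: sum_pathdist_le_policy_value => //; last exact: uniq_last_cat uniq_ps.
exact: pathdist_ge0 (@edge_pmf_ge0) (dirac0_ge0 R) E_ps1.
Qed.

Lemma search_inv_found (Q1 Q2 : seq (entry R V)) (e : entry R V) :
  (forall e', List.In e' (Q1 ++ Q2) -> e'.1 <= e.1) -> last s e.2.2 = d ->
  search_inv (Running (Q1 ++ e :: Q2)) -> search_inv (Finished (Some e.2.2)).
Proof.
move=> max_e last_d [Q_ok Q_covers].
have e_ok : entry_ok e by apply/Q_ok/In_cat_cons; left.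
split.
  have [ps [def_P E_ps uniq_ps _ _]] := e_ok; rewrite def_P in last_d *.
  by apply/and4P; split=> //; apply/eqP.
move=> _ /simple_pathE[ps' [-> E_ps' uniq_ps' last_d']].
have [e' in_e' [ps1 [ps2 [def_ps' e'_path]]]] := Q_covers _ E_ps' uniq_ps' last_d'.
have e'_le_e : e'.1 <= e.1 by case/In_cat_cons: in_e' => [->|/max_e].
rewrite -(entry_ok_dest e_ok last_d) def_ps'; apply: le_trans e'_le_e.
by apply: on_time_prob_le_prefix_key; rewrite -?def_ps' //; apply: Q_ok.
Qed.

Lemma In_successors q P e' : List.In e' (successors E p u T s q P) <->
  exists2 j, E (last s P) j && (j \notin P) & e' = new_entry p u T q P (last s P) j.
Proof.
rewrite List.in_map_iff; split=> [[j [<- /In_memP]]|[j Ej ->]].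
  by rewrite mem_filter => /andP[Ej _]; exists j.
by exists j; split=> //; apply/In_memP; rewrite mem_filter Ej mem_enum.
Qed.

Lemma successors_ok (e e' : entry R V) : entry_ok e ->
  List.In e' (successors E p u T s e.2.1 e.2.2) -> entry_ok e'.
Proof.
case=> ps [def_P E_ps uniq_ps def_q _] /In_successors[j].
rewrite def_P /= => /andP[Ej j_notin] ->; exists (rcons ps j); split.
- by [].
- by rewrite rcons_path E_ps Ej.
- by rewrite -rcons_cons rcons_uniq j_notin uniq_ps.
- by rewrite pathdist_rcons def_q.
- by rewrite last_rcons.
Qed.

Lemma covers_expand (Q1 Q2 : seq (entry R V)) (e : entry R V) :
  entry_ok e -> last s e.2.2 <> d ->
  covers (Q1 ++ e :: Q2) -> covers (Q1 ++ Q2 ++ successors E p u T s e.2.1 e.2.2).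
Proof.
case: e => r [q P] [ps [/= def_P _ _ _ _]] /= last_neq_d; subst P.
move=> Q_covers ps' E_ps' uniq_ps' last_d.
have [e' in_e' [ps1 [ps2 [def_ps' e'_path]]]] := Q_covers _ E_ps' uniq_ps' last_d.
case/In_cat_cons: in_e' => [def_e'|in_e']; last first.
  exists e'; last by exists ps1, ps2.
  by rewrite !List.in_app_iff in in_e' *; tauto.
move: e'_path; rewrite def_e' => -[def_ps1]; subst ps1.
case: ps2 def_ps' => [|j ps3] def_ps'.
  by case: last_neq_d; rewrite -last_d def_ps' cats0.
exists (new_entry p u T q (s :: ps) (last s ps) j).
  apply/List.in_app_iff; right; apply/List.in_app_iff; right.
  apply/In_successors; exists j => //; apply/andP; split.
    by move: E_ps'; rewrite def_ps' cat_path /= => /and3P[_ Ej _].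
  move: uniq_ps'; rewrite def_ps' -cat_cons cat_uniq => /and3P[_ /hasPn j_notin _].
  exact: j_notin (mem_head _ _).
by exists (rcons ps j), ps3; rewrite def_ps' cat_rcons.
Qed.

Lemma search_inv_expand (Q1 Q2 : seq (entry R V)) (e : entry R V) :
  last s e.2.2 <> d -> search_inv (Running (Q1 ++ e :: Q2)) ->
  search_inv (Running (Q1 ++ Q2 ++ successors E p u T s e.2.1 e.2.2)).
Proof.
move=> last_neq_d [Q_ok Q_covers].
have e_ok : entry_ok e by apply/Q_ok/In_cat_cons; left.
split; last exact: covers_expand.
move=> e' /List.in_app_iff[in_e'|/List.in_app_iff[in_e'|in_e']].
- by apply/Q_ok/In_cat_cons; right; apply/List.in_app_iff; left.
- by apply/Q_ok/In_cat_cons; right; apply/List.in_app_iff; right.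
- exact: successors_ok e_ok in_e'.
Qed.

Lemma search_inv_step st st' :
  bfs_step E p u T s d st st' -> search_inv st -> search_inv st'.
Proof.
case=> [|Q1 Q2 e max_e last_d|Q1 Q2 e _ last_neq_d] //.
  exact: search_inv_found.
exact: search_inv_expand.
Qed.

Lemma search_inv_reach st st' :
  reach (bfs_step E p u T s d) st st' -> search_inv st -> search_inv st'.
Proof. by elim=> // x y z /search_inv_step step_inv _ IH /step_inv. Qed.

Lemma bfs_sound P : reach (bfs_step E p u T s d) (bfs_init u T s) (Finished (Some P)) ->
  optimal_path P.
Proof. by move=> reach_P; apply: search_inv_reach reach_P search_inv_init. Qed.

Lemma bfs_progress st :
  (exists st', bfs_step E p u T s d st st') \/ (exists o, st = Finished o).
Proof.
case: st => [[|e0 Q]|o]; [left | left | by right; exists o].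
  by exists (Finished None); constructor.
have [Q1 [e [Q2 [-> max_e]]]] :=
  @exists_max_split _ _ (fun e : entry R V => e.1) (e0 :: Q) ltac:(by []).
have [last_d|last_neq_d] := eqVneq (last s e.2.2) d.
  by eexists; apply: step_found.
by eexists; apply: step_expand => //; apply/eqP.
Qed.

Definition entry_weight (e : entry R V) : nat := (#|V|.+1 ^ (#|V| - size e.2.2))%N.

Definition queue_weight (Q : seq (entry R V)) : nat := (\sum_(e <- Q) entry_weight e)%N.

Lemma queue_weight_cat Q Q' :
  queue_weight (Q ++ Q') = (queue_weight Q + queue_weight Q')%N.
Proof. exact: big_cat. Qed.

Lemma queue_weight_cons e Q : queue_weight (e :: Q) = (entry_weight e + queue_weight Q)%N.
Proof. exact: big_cons. Qed.

Definition state_measure (st : state R V) : nat :=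
  if st is Running Q then queue_weight Q else 0%N.

Lemma entry_ok_size e : entry_ok e -> (size e.2.2 <= #|V|)%N.
Proof. by case=> ps [-> _ /card_uniqP <- _ _]; apply: max_card. Qed.

Lemma queue_weight_successors_lt q P :
  (forall e, List.In e (successors E p u T s q P) -> size e.2.2 <= #|V|)%N ->
  (queue_weight (successors E p u T s q P) < #|V|.+1 ^ (#|V| - size P))%N.
Proof.
move=> succ_size; set S := successors _ _ _ _ _ _ _.
have -> : queue_weight S = (size S * #|V|.+1 ^ (#|V| - (size P).+1))%N.
  rewrite /queue_weight big_map size_map.
  rewrite (eq_bigr (fun=> #|V|.+1 ^ (#|V| - (size P).+1))%N).
  by rewrite big_const_seq count_predT iter_addn_0 mulnC.
  by move=> j _; rewrite /entry_weight size_rcons.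
case def_S: S => [|e S']; first by rewrite mul0n expn_gt0.
have e_in : List.In e S by rewrite def_S; left.
have P_lt_V : (size P < #|V|)%N.
  have /In_successors[j _ def_e] := e_in.
  by have := succ_size e e_in; rewrite def_e /= size_rcons.
have S_le_V : (size S <= #|V|)%N by rewrite size_map size_filter cardE count_size.
have -> : (#|V| - size P = (#|V| - (size P).+1).+1)%N by lia.
by rewrite -def_S expnS ltn_pmul2r ?expn_gt0.
Qed.

Lemma queue_weight_expand (Q1 Q2 : seq (entry R V)) (e : entry R V) :
  last s e.2.2 <> d -> search_inv (Running (Q1 ++ e :: Q2)) ->
  (queue_weight (Q1 ++ Q2 ++ successors E p u T s e.2.1 e.2.2) <
   queue_weight (Q1 ++ e :: Q2))%N.
Proof.
move=> last_neq_d inv; have [succ_ok _] := search_inv_expand last_neq_d inv.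
rewrite !queue_weight_cat queue_weight_cons ltn_add2l (addnC (entry_weight e)).
rewrite ltn_add2l.
apply: queue_weight_successors_lt => e' in_e'; apply/entry_ok_size/succ_ok.
by apply/List.in_app_iff; right; apply/List.in_app_iff; right.
Qed.

Lemma bfs_acc_measure n st : search_inv st -> (state_measure st < n)%N ->
  Acc (fun y x => bfs_step E p u T s d x y) st.
Proof.
elim: n st => [//|n IH] st inv measure_lt; constructor=> st' step.
case: step inv measure_lt => [||Q1 Q2 e _ last_neq_d] inv measure_lt.
1,2: by constructor=> ? step; inversion step.
apply: IH; first exact: search_inv_expand.
by rewrite -ltnS; apply: leq_trans measure_lt; apply: queue_weight_expand.
Qed.

End OptimalPolicy.

Theorem mainTheorem1 (R : realType) (V : finType) (E : rel V) (s d : V) (T : nat)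
    (p : V -> V -> nat -> R) (u : V -> nat -> R)
    (hp : forall i j, E i j -> is_pmf_pos (p i j))
    (hu : is_opt_policy E p d T u) :
  (* termination: every run is finite, and every non-finished reachable state can step *)
  Acc (fun y x => bfs_step E p u T s d x y) (bfs_init u T s) /\
  (forall st, reach (bfs_step E p u T s d) (bfs_init u T s) st ->
     (exists st', bfs_step E p u T s d st st') \/ (exists o, st = Finished o)) /\
  (* correctness of a returned path *)
  (forall P, reach (bfs_step E p u T s d) (bfs_init u T s) (Finished (Some P)) ->
     simple_path E s d P /\
     (forall P', simple_path E s d P' -> on_time_prob p T P' <= on_time_prob p T P)).
Proof.
split; first exact: bfs_acc_measure (search_inv_init E d T p u s) (ltnSn _).
split; first by move=> st _; apply: bfs_progress.
by move=> P reach_P; have optimal_P := bfs_sound hp hu reach_P.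
Qed.
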